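(* Let $\mu_1:\mathrm{Sym}^-\to B_2$ be an arbitrary measure, fix $a\in\mathbb R\cup\{\infty\}$ and define $g:\mathbb R\cup\{\infty\}\to B_2$ by $g(t)=\mu_1([[a,t)))$. (a) $g$ is left continuous on $\mathbb R\cup\{\infty\}$: for every $t\in\mathbb R\cup\{\infty\}$ there exists a real $t'<t$ such that $g(\xi)=g(t)$ for all $\xi\in(t',t)$. (b) $\mu_1$ is the left Lebesgue–Stieltjes measure associated to $g$, i.e. $\mu_1\big([[a_1,b_1))\Delta\cdots\Delta[[a_n,b_n))\big)=g(a_1)\oplus g(b_1)\oplus\cdots\oplus g(a_n)\oplus g(b_n)$ for all $a_1,\dots,a_n,b_1,\dots,b_n\in\mathbb R\cup\{\infty\}$.
   Context: $B_2=\{0,1\}$, $\oplus$ addition modulo 2, $\Delta$ symmetric difference. For $a,b\in\mathbb R\cup\{\infty\}$: $[[a,b))=[a,b)$ if $a<b$, $[b,a)$ if $b<a$, $\emptyset$ if $a=b$. $\mathrm{Sym}^-$ is the family of subsets of $\mathbb R$ generated by these intervals under $\Delta$ and $\cap$. $\mu_1$ is a measure if for every sequence of pairwise disjoint sets of $\mathrm{Sym}^-$ whose union lies in $\mathrm{Sym}^-$, only finitely many have $\mu_1$-value 1 and $\mu_1$ of the union is their number modulo 2. *)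

From Stdlib Require Import Reals.
Open Scope R_scope.

(* The extended line R ∪ {∞}: [None] is ∞, larger than every real. *)
Definition ext := option R.

Definition ext_lt (x y : ext) : Prop :=
  match x, y with
  | Some a, Some b => a < b
  | Some _, None => True
  | None, _ => False
  end.

Definition ext_le (x y : ext) : Prop :=
  match x, y with
  | Some a, Some b => a <= b
  | _, None => True
  | None, Some _ => False
  end.

Definition rset := R -> Prop.

Definition iv (a b : ext) : rset := fun x =>
  (ext_lt a b /\ ext_le a (Some x) /\ ext_lt (Some x) b) \/
  (ext_lt b a /\ ext_le b (Some x) /\ ext_lt (Some x) a).

Definition symdiff (A B : rset) : rset := fun x => (A x /\ ~ B x) \/ (B x /\ ~ A x).
Definition inter (A B : rset) : rset := fun x => A x /\ B x.

Inductive SymM : rset -> Prop :=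
  | SymM_iv : forall a b, SymM (iv a b)
  | SymM_symdiff : forall A B, SymM A -> SymM B -> SymM (symdiff A B)
  | SymM_inter : forall A B, SymM A -> SymM B -> SymM (inter A B)
  | SymM_ext : forall A B, SymM A -> (forall x, A x <-> B x) -> SymM B.

Fixpoint xor_upto (f : nat -> bool) (n : nat) : bool :=
  match n with
  | O => false
  | S k => xorb (xor_upto f k) (f k)
  end.

Fixpoint symdiff_upto (A : nat -> rset) (n : nat) : rset :=
  match n with
  | O => fun _ => False
  | S k => symdiff (symdiff_upto A k) (A k)
  end.

Definition bigunion (A : nat -> rset) : rset := fun x => exists n, A n x.

(* μ : Sym^- -> B_2 (values outside Sym^- are irrelevant) is a measure:
   for every sequence of pairwise disjoint sets of Sym^- whose union lies in
   Sym^-, only finitely many have value 1 (all indices >= N give 0) and the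
   value of the union is their number modulo 2. *)
Definition is_measure (mu : rset -> bool) : Prop :=
  forall A : nat -> rset,
    (forall n, SymM (A n)) ->
    (forall m n, m <> n -> forall x, A m x -> A n x -> False) ->
    SymM (bigunion A) ->
    exists N : nat,
      (forall n, (N <= n)%nat -> mu (A n) = false) /\
      mu (bigunion A) = xor_upto (fun n => mu (A n)) N.

From Stdlib Require Import Bool Reals Lra Lia Classical FunctionalExtensionality PropExtensionality IndefiniteDescription.
Open Scope R_scope.

(* Since [[p,q)) = [[a,p)) Δ [[a,q)) and μ turns Δ into ⊕ (split A, B and A Δ B
   into the disjoint pieces A∖B, B∖A, A∩B), μ([[p,q))) = g(p) ⊕ g(q); this is (b).
   For (a) it suffices that μ([[t,ξ))) = 0 for all ξ close enough below t.
   Otherwise there is an increasing sequence ξ_k → t with μ([[t,ξ_k))) = 1 for all k;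
   then [ξ_0,t) is the disjoint union of the [ξ_k,ξ_(k+1)), each of measure
   1 ⊕ 1 = 0, although it has measure 1 itself. *)

Definition rset0 : rset := fun _ => False.
Definition runion (A B : rset) : rset := fun x => A x \/ B x.

Lemma rset_ext (A B : rset) : (forall x, A x <-> B x) -> A = B.
Proof.
  intro H; apply functional_extensionality; intro x.
  apply propositional_extensionality; exact (H x).
Qed.

Lemma ext_le_iff_not_lt p x : ext_le p (Some x) <-> ~ ext_lt (Some x) p.
Proof. destruct p as [a|]; simpl; [split; lra | tauto]. Qed.

Lemma ext_lt_of_between p q x :
  ~ ext_lt (Some x) p -> ext_lt (Some x) q -> ext_lt p q.
Proof. destruct p as [a|], q as [b|]; simpl; auto; lra. Qed.

Lemma ext_lt_le_trans x y t : x <= y -> ext_lt (Some y) t -> ext_lt (Some x) t.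
Proof. destruct t; simpl; auto; lra. Qed.

Lemma iv_iff p q x : iv p q x <-> (ext_lt (Some x) p <-> ~ ext_lt (Some x) q).
Proof.
  unfold iv; rewrite !ext_le_iff_not_lt.
  pose proof (ext_lt_of_between p q x); pose proof (ext_lt_of_between q p x).
  destruct (classic (ext_lt (Some x) p)), (classic (ext_lt (Some x) q)); tauto.
Qed.

Lemma iv_symdiff c p q : iv p q = symdiff (iv c p) (iv c q).
Proof.
  apply rset_ext; intro x; unfold symdiff; rewrite !iv_iff.
  destruct (classic (ext_lt (Some x) c)), (classic (ext_lt (Some x) p)),
    (classic (ext_lt (Some x) q)); tauto.
Qed.

Lemma iv_Some_lt a b x : a < b -> (iv (Some a) (Some b) x <-> a <= x < b).
Proof. intro Hab; rewrite iv_iff; simpl; split; intro; lra. Qed.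

Lemma iv_below t y x :
  ext_lt (Some y) t -> (iv t (Some y) x <-> y <= x /\ ext_lt (Some x) t).
Proof.
  intro Hy; rewrite iv_iff; simpl.
  assert (Hxy : x < y <-> ~ y <= x) by (split; intros; lra).
  destruct (Rle_dec y x) as [Hyx|Hyx].
  - tauto.
  - assert (ext_lt (Some x) t) by (apply (ext_lt_le_trans x y t); [lra | exact Hy]); tauto.
Qed.

Definition approx_below (t : ext) (k : nat) : R :=
  match t with Some r => r - / INR (S k) | None => INR k end.

Lemma approx_below_lt t k : ext_lt (Some (approx_below t k)) t.
Proof.
  assert (0 < / INR (S k)) by (apply Rinv_0_lt_compat, lt_0_INR; lia).
  destruct t as [r|]; unfold approx_below, ext_lt; [lra | exact I].
Qed.

Lemma approx_below_cofinal t y : ext_lt (Some y) t -> exists k, y < approx_below t k.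
Proof.
  destruct t as [r|]; unfold approx_below, ext_lt; intro Hy.
  - destruct (archimed_cor1 (r - y)) as [N [HN HN0]]; [lra|].
    exists (pred N); rewrite Nat.succ_pred_pos by exact HN0; lra.
  - destruct (INR_archimed 1 y) as [n Hn]; [lra|]; exists n; lra.
Qed.

Lemma cofinal_increasing_seq (t : ext) (P : R -> Prop) :
  (forall y, ext_lt (Some y) t -> exists x, y < x /\ ext_lt (Some x) t /\ P x) ->
  exists s : nat -> R,
    (forall k, ext_lt (Some (s k)) t /\ P (s k) /\ s k < s (S k)) /\
    (forall y, ext_lt (Some y) t -> exists k, y < s k).
Proof.
  intro Hcof.
  destruct (functional_choice
    (fun y x => ext_lt (Some y) t -> y < x /\ ext_lt (Some x) t /\ P x)) as [f Hf].
  { intro y; destruct (classic (ext_lt (Some y) t)) as [Hy|Hy].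
    - destruct (Hcof y Hy) as [x Hx]; exists x; auto.
    - exists y; tauto. }
  (* The max with [approx_below t (S k)] is what makes [s] cofinal below [t]. *)
  pose (s := fix s k := match k with
    | O => f (approx_below t 0)
    | S k => f (Rmax (s k) (approx_below t (S k))) end).
  assert (Hstep : forall k, ext_lt (Some (s k)) t ->
    Rmax (s k) (approx_below t (S k)) < s (S k) /\ ext_lt (Some (s (S k))) t /\ P (s (S k))).
  { intros k Hk; apply Hf, Rmax_case; auto using approx_below_lt. }
  assert (Hinv : forall k, approx_below t k < s k /\ ext_lt (Some (s k)) t /\ P (s k)).
  { induction k as [|k (_ & Hk & _)].
    - apply Hf, approx_below_lt.
    - destruct (Hstep k Hk) as (Hlt & ? & ?); repeat split; auto.
      eapply Rle_lt_trans; [apply Rmax_r | exact Hlt]. }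
  exists s; split.
  - intro k; destruct (Hinv k) as (_ & Hk & HP); repeat split; auto.
    destruct (Hstep k Hk) as (Hlt & _ & _).
    eapply Rle_lt_trans; [apply Rmax_l | exact Hlt].
  - intros y Hy; destruct (approx_below_cofinal t y Hy) as [k Hk].
    exists k; destruct (Hinv k) as (? & _ & _); lra.
Qed.

Section IncreasingSteps.

Variable t : ext.
Variable s : nat -> R.
Hypothesis s_below : forall k, ext_lt (Some (s k)) t.
Hypothesis s_incr : forall k, s k < s (S k).
Hypothesis s_cofinal : forall y, ext_lt (Some y) t -> exists k, y < s k.

Lemma incr_seq_le m n : (m <= n)%nat -> s m <= s n.
Proof.
  intro Hmn; apply Rge_le, growing_prop; [|exact Hmn].
  intro k; apply Rlt_le, s_incr.
Qed.

Lemma iv_steps_disjoint m n : m <> n ->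
  forall x, iv (Some (s m)) (Some (s (S m))) x -> iv (Some (s n)) (Some (s (S n))) x -> False.
Proof.
  intros Hmn x; rewrite !iv_Some_lt by apply s_incr; intros Hm Hn.
  destruct (Nat.lt_total m n) as [Hlt|[Heq|Hlt]]; [| contradiction |].
  - pose proof (incr_seq_le (S m) n Hlt); lra.
  - pose proof (incr_seq_le (S n) m Hlt); lra.
Qed.

Lemma bigunion_iv_steps :
  bigunion (fun k => iv (Some (s k)) (Some (s (S k)))) = iv t (Some (s 0)).
Proof.
  apply rset_ext; intro x; rewrite iv_below by apply s_below; unfold bigunion; split.
  - intros [k Hk]; rewrite iv_Some_lt in Hk by apply s_incr.
    pose proof (incr_seq_le 0 k (Nat.le_0_l k)); split; [lra|].
    apply (ext_lt_le_trans x (s (S k))); [lra | apply s_below].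
  - intros [H0 Ht]; destruct (s_cofinal x Ht) as [k Hk].
    induction k as [|k IH]; [lra|].
    destruct (Rlt_le_dec x (s k)) as [Hlt|Hle]; [exact (IH Hlt)|].
    exists k; rewrite iv_Some_lt by apply s_incr; lra.
Qed.

End IncreasingSteps.

Lemma SymM_rset0 : SymM rset0.
Proof.
  apply (SymM_ext (iv None None)); [constructor|].
  intro x; rewrite iv_iff; unfold rset0; simpl; tauto.
Qed.

Lemma SymM_symdiff_upto (A : nat -> rset) n :
  (forall i, SymM (A i)) -> SymM (symdiff_upto A n).
Proof.
  intro HA; induction n; simpl; [exact SymM_rset0 | apply SymM_symdiff; auto].
Qed.

Lemma xor_upto_ext (f g : nat -> bool) n :
  (forall i, f i = g i) -> xor_upto f n = xor_upto g n.
Proof. intro Hfg; induction n; simpl; [reflexivity | now rewrite IHn, Hfg]. Qed.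

Lemma xor_upto_false (f : nat -> bool) n :
  (forall i, f i = false) -> xor_upto f n = false.
Proof. intro Hf; induction n; simpl; [reflexivity | now rewrite IHn, Hf]. Qed.

Lemma xor_upto_stable (f : nat -> bool) N :
  (forall n, (N <= n)%nat -> f n = false) ->
  forall M, (N <= M)%nat -> xor_upto f M = xor_upto f N.
Proof.
  intros Hf M HM; induction HM as [|M HM IH]; [reflexivity|].
  simpl; rewrite IH, (Hf M HM); apply xorb_false_r.
Qed.

Definition pair_seq (A B : rset) (n : nat) : rset :=
  match n with 0%nat => A | 1%nat => B | _ => rset0 end.

Section Measure.

Variable mu : rset -> bool.
Hypothesis Hmu : is_measure mu.

Lemma mu_rset0 : mu rset0 = false.
Proof.
  destruct (Hmu (fun _ => rset0)) as [N [HN _]].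
  - intros _; exact SymM_rset0.
  - intros m n _ x [].
  - apply (SymM_ext rset0); [exact SymM_rset0|].
    intro x; unfold bigunion, rset0; split; [tauto | intros [_ []]].
  - exact (HN N (le_n N)).
Qed.

Lemma mu_bigunion_null (A : nat -> rset) :
  (forall n, SymM (A n)) ->
  (forall m n, m <> n -> forall x, A m x -> A n x -> False) ->
  SymM (bigunion A) ->
  (forall n, mu (A n) = false) -> mu (bigunion A) = false.
Proof.
  intros HA Hdisj HU Hnull.
  destruct (Hmu A HA Hdisj HU) as [N [_ ->]].
  now apply xor_upto_false.
Qed.

Lemma mu_runion A B : SymM A -> SymM B -> (forall x, A x -> B x -> False) ->
  SymM (runion A B) -> mu (runion A B) = xorb (mu A) (mu B).
Proof.
  intros HA HB Hdisj HU.
  assert (Hunion : bigunion (pair_seq A B) = runion A B).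
  { apply rset_ext; intro x; unfold bigunion, runion; split.
    - intros [[|[|n]] H]; simpl in H; tauto.
    - intros [H|H]; [exists 0%nat | exists 1%nat]; exact H. }
  destruct (Hmu (pair_seq A B)) as [N [HN HS]].
  - intros [|[|n]]; simpl; auto using SymM_rset0.
  - intros [|[|m]] [|[|n]] Hmn x H1 H2; simpl in *; try lia; eauto.
  - now rewrite Hunion.
  - rewrite Hunion in HS; rewrite HS.
    assert (Htail : forall n, (2 <= n)%nat -> mu (pair_seq A B n) = false).
    { intros [|[|n]] Hn; [lia | lia | apply mu_rset0]. }
    rewrite <- (xor_upto_stable _ N HN (N + 2)) by lia.
    now rewrite (xor_upto_stable _ 2 Htail (N + 2)) by lia.
Qed.

Lemma mu_symdiff A B : SymM A -> SymM B -> mu (symdiff A B) = xorb (mu A) (mu B).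
Proof.
  intros HA HB.
  set (AmB := inter A (symdiff A B)); set (BmA := inter B (symdiff A B)).
  set (AB := inter A B).
  assert (HAB : SymM (symdiff A B)) by (apply SymM_symdiff; assumption).
  assert (HAmB : SymM AmB) by (apply SymM_inter; assumption).
  assert (HBmA : SymM BmA) by (apply SymM_inter; assumption).
  assert (HAB' : SymM AB) by (apply SymM_inter; assumption).
  assert (eA : A = runion AmB AB)
    by (apply rset_ext; intro x; cbv [runion AmB AB inter symdiff]; tauto).
  assert (eB : B = runion BmA AB)
    by (apply rset_ext; intro x; cbv [runion BmA AB inter symdiff]; tauto).
  assert (eAB : symdiff A B = runion AmB BmA)
    by (apply rset_ext; intro x; cbv [runion AmB BmA inter symdiff]; tauto).
  assert (mA : mu A = xorb (mu AmB) (mu AB)).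
  { rewrite eA at 1; apply mu_runion; [assumption | assumption | | now rewrite <- eA].
    intro x; cbv [AmB AB inter symdiff]; tauto. }
  assert (mB : mu B = xorb (mu BmA) (mu AB)).
  { rewrite eB at 1; apply mu_runion; [assumption | assumption | | now rewrite <- eB].
    intro x; cbv [BmA AB inter symdiff]; tauto. }
  assert (mAB : mu (symdiff A B) = xorb (mu AmB) (mu BmA)).
  { rewrite eAB; apply mu_runion; [assumption | assumption | | now rewrite <- eAB].
    intro x; cbv [AmB BmA inter symdiff]; tauto. }
  rewrite mA, mB, mAB; now destruct (mu AmB), (mu BmA), (mu AB).
Qed.

Lemma mu_symdiff_upto (A : nat -> rset) n : (forall i, SymM (A i)) ->
  mu (symdiff_upto A n) = xor_upto (fun i => mu (A i)) n.
Proof.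
  intro HA; induction n as [|n IH]; simpl; [exact mu_rset0|].
  rewrite mu_symdiff, IH; auto using SymM_symdiff_upto.
Qed.

Lemma mu_iv c p q : mu (iv p q) = xorb (mu (iv c p)) (mu (iv c q)).
Proof. rewrite (iv_symdiff c p q); apply mu_symdiff; constructor. Qed.

Lemma mu_iv_null_left t : exists t', ext_lt (Some t') t /\
  forall x, t' < x -> ext_lt (Some x) t -> mu (iv t (Some x)) = false.
Proof.
  apply NNPP; intro Hnot.
  assert (Hcof : forall y, ext_lt (Some y) t ->
    exists x, y < x /\ ext_lt (Some x) t /\ mu (iv t (Some x)) = true).
  { intros y Hy; apply NNPP; intro Hno; apply Hnot.
    exists y; split; [exact Hy|]; intros x Hyx Hxt.
    apply not_true_is_false; intro Hx; apply Hno; eauto. }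
  destruct (cofinal_increasing_seq t _ Hcof) as (s & Hs & Hs_cofinal).
  assert (Hs_below : forall k, ext_lt (Some (s k)) t) by apply Hs.
  assert (Hs_incr : forall k, s k < s (S k)) by apply Hs.
  assert (Hnull : mu (bigunion (fun k => iv (Some (s k)) (Some (s (S k))))) = false).
  { apply mu_bigunion_null.
    - constructor.
    - apply iv_steps_disjoint, Hs_incr.
    - rewrite (bigunion_iv_steps t s Hs_below Hs_incr Hs_cofinal); constructor.
    - intro k; rewrite (mu_iv t).
      now destruct (Hs k) as (_ & -> & _), (Hs (S k)) as (_ & -> & _). }
  rewrite (bigunion_iv_steps t s Hs_below Hs_incr Hs_cofinal) in Hnull.
  destruct (Hs 0%nat) as (_ & Hs0 & _); congruence.
Qed.

End Measure.

Theorem theorem6p7 (mu : rset -> bool) (a : ext) (Hmu : is_measure mu) :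
  let g := fun t : ext => mu (iv a t) in
  (forall t : ext, exists t' : R, ext_lt (Some t') t /\
     forall xi : R, ext_lt (Some t') (Some xi) -> ext_lt (Some xi) t ->
       g (Some xi) = g t) /\
  (forall (n : nat) (aa bb : nat -> ext), (0 < n)%nat ->
     mu (symdiff_upto (fun i => iv (aa i) (bb i)) n) =
     xor_upto (fun i => xorb (g (aa i)) (g (bb i))) n).
Proof.
  intro g; split.
  - intro t; destruct (mu_iv_null_left mu Hmu t) as (t' & Ht' & Hnull).
    exists t'; split; [exact Ht'|]; intros x Hx Hxt.
    specialize (Hnull x Hx Hxt); rewrite (mu_iv mu Hmu a) in Hnull.
    symmetry; exact (xorb_eq _ _ Hnull).
  -
    intros n aa bb _; rewrite (mu_symdiff_upto mu Hmu) by (intro; constructor).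
    apply xor_upto_ext; intro i; apply mu_iv, Hmu.
Qed.
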